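(* Let $\bar{\boldsymbol{\Psi}}_{\mathrm{id}}=\mathrm{diag}(\bar\psi_{\mathrm{id},1},\dots,\bar\psi_{\mathrm{id},N})$ with all entries positive, $\bar\psi_{\mathrm{f},1}>0$, $\mathbf{w}_1=(w_{11},\dots,w_{1N})^\top\in\mathbb{R}^N\setminus\{\mathbf{0}\}$, $\theta\in[0,1]$, and $\alpha_1,\dots,\alpha_T>0$, $\beta_1,\dots,\beta_T>0$ with $\sum_t\alpha_t=\sum_t\beta_t=1$. For nonzero $\mathbf{x}_0\in\mathbb{R}^N$ let $$\Upsilon(\mathbf{x}_0)=\frac{\sum_{t=1}^T(\alpha_t(1-\theta)+\beta_t\theta)^2\,\mathbf{x}_0^\top\left(\alpha_t\bar{\boldsymbol{\Psi}}_{\mathrm{id}}+\beta_t\bar\psi_{\mathrm{f},1}\mathbf{w}_1\mathbf{w}_1^\top\right)^{-1}\mathbf{x}_0}{\mathbf{x}_0^\top\left(\bar{\boldsymbol{\Psi}}_{\mathrm{id}}+\bar\psi_{\mathrm{f},1}\mathbf{w}_1\mathbf{w}_1^\top\right)^{-1}\mathbf{x}_0},$$ $\gamma_t=\beta_t/\alpha_t$, $\eta_1=\bar\psi_{\mathrm{f},1}\mathbf{w}_1^\top\bar{\boldsymbol{\Psi}}_{\mathrm{id}}^{-1}\mathbf{w}_1$, $\Delta=\sum_{t=1}^T\frac{\alpha_t(1-\theta(1-\gamma_t))^2(1-\gamma_t)}{1+\eta_1\gamma_t}$, and $\eta_{1,i}=\frac{w_{1i}^2\bar\psi_{\mathrm{f},1}}{\bar\psi_{\mathrm{id},i}}$.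 Then for each standard basis vector $\mathbf{e}_i$, $$\Upsilon(\mathbf{e}_i)=1+\theta^2\Big(\sum_{t=1}^T\frac{\beta_t^2}{\alpha_t}-1\Big)+\frac{\eta_{1,i}}{1+\eta_1-\eta_{1,i}}\,\Delta,$$ and $$\arg\max_{i=1,\dots,N}\Upsilon(\mathbf{e}_i)=\begin{cases}\arg\max_{i}\ w_{1i}^2/\bar\psi_{\mathrm{id},i}&\text{if }\Delta\ge0,\\ \arg\min_{i}\ w_{1i}^2/\bar\psi_{\mathrm{id},i}&\text{if }\Delta\le0.\end{cases}$$
   Context: $\Upsilon(\mathbf{x}_0)$ is the ratio of the expected cost of the separable schedule $(\alpha_t(1-\theta)+\beta_t\theta)\mathbf{x}_0$ to the minimal expected cost of liquidating $\mathbf{x}_0$, with time-$t$ impact matrix $\mathbf{G}_t=\left(\alpha_t\bar{\boldsymbol{\Psi}}_{\mathrm{id}}+\beta_t\bar\psi_{\mathrm{f},1}\mathbf{w}_1\mathbf{w}_1^\top\right)^{-1}$ and cost $\sum_t\tfrac12\mathbf{v}_t^\top\mathbf{G}_t\mathbf{v}_t$; $\mathbf{e}_i$ corresponds to liquidating a single order in stock $i$. *)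

From HB Require Import structures.
From mathcomp Require Import all_boot all_order all_algebra.
Set Implicit Arguments. Unset Strict Implicit. Unset Printing Implicit Defensive.
Import Order.TTheory GRing.Theory Num.Theory.
Local Open Scope ring_scope.

Definition quad (R : comNzRingType) (N : nat) (x : 'cV[R]_N) (M : 'M[R]_N) : R :=
  (x^T *m M *m x) 0 0.

Definition Psi_id (R : comNzRingType) (N : nat) (psi : 'I_N -> R) : 'M[R]_N :=
  diag_mx (\row_i psi i).

Definition Gmat (R : comUnitRingType) (N : nat) (psi : 'I_N -> R) (psif : R)
  (w : 'cV[R]_N) (a b : R) : 'M[R]_N :=
  invmx (a *: Psi_id psi + (b * psif) *: (w *m w^T)).

Definition Upsilon (R : fieldType) (N T : nat) (psi : 'I_N -> R) (psif : R)
  (w : 'cV[R]_N) (theta : R) (alpha beta : 'I_T -> R) (x0 : 'cV[R]_N) : R :=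
  (\sum_(t < T) (alpha t * (1 - theta) + beta t * theta) ^+ 2
       * quad x0 (Gmat psi psif w (alpha t) (beta t)))
  / quad x0 (Gmat psi psif w 1 1).

Definition ebasis (R : comNzRingType) (N : nat) (i : 'I_N) : 'cV[R]_N :=
  delta_mx i 0.

Definition eta1 (R : comUnitRingType) (N : nat) (psi : 'I_N -> R) (psif : R)
  (w : 'cV[R]_N) : R :=
  psif * quad w (invmx (Psi_id psi)).

Definition eta1i (R : fieldType) (N : nat) (psi : 'I_N -> R) (psif : R)
  (w : 'cV[R]_N) (i : 'I_N) : R :=
  w i 0 ^+ 2 * psif / psi i.

Definition gam (R : fieldType) (T : nat) (alpha beta : 'I_T -> R) (t : 'I_T) : R :=
  beta t / alpha t.

Definition Delta (R : fieldType) (N T : nat) (psi : 'I_N -> R) (psif : R)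
  (w : 'cV[R]_N) (theta : R) (alpha beta : 'I_T -> R) : R :=
  \sum_(t < T) alpha t * (1 - theta * (1 - gam alpha beta t)) ^+ 2
      * (1 - gam alpha beta t) / (1 + eta1 psi psif w * gam alpha beta t).

From HB Require Import structures.
From mathcomp Require Import all_boot all_order all_algebra.
From mathcomp Require Import ring lra.
Set Implicit Arguments. Unset Strict Implicit. Unset Printing Implicit Defensive.
Import Order.TTheory GRing.Theory Num.Theory.
Local Open Scope ring_scope.

(* By Sherman-Morrison, the i-th diagonal entry of
   (a Psi_id + b psif w w^T)^-1 is (a psi_i)^-1 (1 - b eta_1i / (a + b eta_1)),
   where eta_1 is the sum of the eta_1i.  With a = alpha_t, b = beta_t, each
   term of Upsilon(e_i) becomes alpha_t (1 - theta (1 - gamma_t))^2 times a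
   rational function of eta_1, eta_1i and gamma_t, and summing gives the
   closed form.  The index i enters only through the odds
   eta_1i / (1 + eta_1 - eta_1i), increasing in eta_1i, which is proportional
   to w_1i^2 / psi_i; its coefficient is Delta, whose sign decides whether
   Upsilon(e_i) is maximised at the largest or the smallest such ratio. *)

Lemma mulmx1_invmx (R : comUnitRingType) n (A B : 'M[R]_n) :
  A *m B = 1%:M -> invmx A = B.
Proof.
move=> AB; have [uA _] := mulmx1_unit AB.
by rewrite -[invmx A]mulmx1 -AB mulKmx.
Qed.

Lemma invmx_sherman_morrison (R : fieldType) n (A : 'M[R]_n) (u v : 'cV[R]_n) :
  A \in unitmx -> 1 + (v^T *m invmx A *m u) 0 0 != 0 ->
  invmx (A + u *m v^T) = invmx A
    - (1 + (v^T *m invmx A *m u) 0 0)^-1 *: (invmx A *m u *m (v^T *m invmx A)).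
Proof.
set s := (v^T *m invmx A *m u) 0 0; move=> uA s1; apply: mulmx1_invmx; set B := invmx A.
have uvu : u *m v^T *m B *m u = s *: u.
  by rewrite -!mulmxA (mulmxA v^T) [v^T *m B *m u]mx11_scalar mul_mx_scalar.
rewrite mulmxBr mulmxDl mulmxV // -!scalemxAr mulmxDl.
rewrite !mulmxA mulmxV // mul1mx uvu -!scalemxAl.
rewrite -[X in X + s *: _]scale1r -scalerDl scalerA mulVf // scale1r.
by rewrite addrK.
Qed.

Lemma quad_ebasis (R : comNzRingType) n (i : 'I_n) (A : 'M[R]_n) :
  quad (ebasis R i) A = A i i.
Proof. by rewrite /quad /ebasis trmx_delta -rowE -colE !mxE. Qed.

Lemma quad_Psi_id (R : comNzRingType) n (x : 'cV[R]_n) (d : 'I_n -> R) :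
  quad x (Psi_id d) = \sum_i x i 0 ^+ 2 * d i.
Proof.
rewrite /quad /Psi_id mul_mx_diag mxE; apply: eq_bigr => i _.
by rewrite !mxE mulrAC -expr2.
Qed.

Lemma scale_Psi_id (R : comNzRingType) n (a : R) (d : 'I_n -> R) :
  a *: Psi_id d = Psi_id (fun i => a * d i).
Proof.
apply/matrixP=> i j; rewrite !mxE.
by case: eqP => [->|_]; rewrite ?mulr1n ?mulr0n ?mulr0 // mxE.
Qed.

Lemma invmx_Psi_id (R : fieldType) n (d : 'I_n -> R) :
  (forall i, d i != 0) -> invmx (Psi_id d) = Psi_id (fun i => (d i)^-1).
Proof.
move=> d0; apply: mulmx1_invmx; rewrite /Psi_id mulmx_diag.
apply/matrixP=> i j; rewrite !mxE.
by case: eqP => [->|_]; rewrite ?mulr1n ?mulr0n ?mulfV.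
Qed.

Lemma unitmx_Psi_id (R : fieldType) n (d : 'I_n -> R) :
  (forall i, d i != 0) -> Psi_id d \in unitmx.
Proof.
by move=> d0; rewrite unitmxE det_diag unitfE; apply/prodf_neq0 => i _; rewrite mxE.
Qed.

Section ImpactMatrix.
Variables (R : fieldType) (N : nat) (psi : 'I_N -> R) (psif : R) (w : 'cV[R]_N).
Hypothesis psi_neq0 : forall i, psi i != 0.

Local Notation eta := (eta1 psi psif w).
Local Notation eta_ := (eta1i psi psif w).

Lemma eta1_sum : eta = \sum_i eta_ i.
Proof.
rewrite /eta1 invmx_Psi_id // quad_Psi_id mulr_sumr.
by apply: eq_bigr => i _; rewrite /eta1i mulrCA mulrA.
Qed.

Lemma Gmat_diag (a b : R) i : a != 0 -> a + b * eta != 0 ->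
  Gmat psi psif w a b i i = (a * psi i)^-1 * (1 - b * eta_ i / (a + b * eta)).
Proof.
move=> a0 ab0; have apsi0 j : a * psi j != 0 by rewrite mulf_neq0.
have sE : (w^T *m Psi_id (fun j => (a * psi j)^-1) *m ((b * psif) *: w)) 0 0
          = b * eta / a.
  rewrite -scalemxAr mxE -[(_ *m w) 0 0]/(quad w _) quad_Psi_id eta1_sum.
  rewrite mulr_sumr mulr_sumr mulr_suml; apply: eq_bigr => j _.
  by rewrite /eta1i; field; rewrite psi_neq0 a0.
have sa0 : 1 + b * eta / a != 0.
  by rewrite -[1](divff a0) -mulrDl mulf_neq0 ?invr_eq0.
rewrite /Gmat scalemxAl scale_Psi_id invmx_sherman_morrison ?unitmx_Psi_id //;
  rewrite invmx_Psi_id // sE //.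
rewrite !mxE big_ord1 /Psi_id mul_diag_mx mul_mx_diag !mxE eqxx mulr1n /eta1i.
by field; rewrite ab0 psi_neq0 a0.
Qed.
End ImpactMatrix.

Lemma ler_div_sub (R : realFieldType) (a x y : R) :
  0 <= x -> x <= y -> 0 < a - y -> x / (a - x) <= y / (a - y).
Proof.
move=> x_ge0 le_xy ay_gt0; have ax_gt0 : 0 < a - x by lra.
by rewrite ler_pdivrMr // mulrAC ler_pdivlMr //; nra.
Qed.

Section CostRatio.
Variables (R : realFieldType) (N T : nat) (psi : 'I_N -> R) (psif : R).
Variables (w : 'cV[R]_N) (theta : R) (alpha beta : 'I_T -> R).
Hypotheses (psi_gt0 : forall i, 0 < psi i) (psif_gt0 : 0 < psif).
Hypotheses (alpha_gt0 : forall t, 0 < alpha t) (beta_gt0 : forall t, 0 < beta t).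
Hypotheses (alpha_sum1 : \sum_t alpha t = 1) (beta_sum1 : \sum_t beta t = 1).

Local Notation eta := (eta1 psi psif w).
Local Notation eta_ := (eta1i psi psif w).
Let psi_neq0 i : psi i != 0. Proof. by rewrite gt_eqF. Qed.

Lemma eta1i_ge0 i : 0 <= eta_ i.
Proof. by rewrite /eta1i divr_ge0 ?(mulr_ge0 (sqr_ge0 _)) ?ltW. Qed.

Lemma eta1i_le_eta1 i : eta_ i <= eta.
Proof.
rewrite eta1_sum // (bigD1 i) //= lerDl.
by apply: sumr_ge0 => j _; apply: eta1i_ge0.
Qed.

Lemma eta1i_le i j : w i 0 ^+ 2 / psi i <= w j 0 ^+ 2 / psi j -> eta_ i <= eta_ j.
Proof.
by move=> le_ij; rewrite /eta1i mulrAC [leRHS]mulrAC ler_wpM2r // ltW.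
Qed.

Lemma eta1_ge0 : 0 <= eta.
Proof.
by rewrite eta1_sum //; apply: sumr_ge0 => i _; apply: eta1i_ge0.
Qed.

Lemma add_mul_eta1_gt0 a b : 0 < a -> 0 <= b -> 0 < a + b * eta.
Proof. by move=> a_gt0 b_ge0; rewrite ltr_wpDr // mulr_ge0 // eta1_ge0. Qed.

Lemma eta1_sub_eta1i_gt0 i : 0 < 1 + eta - eta_ i.
Proof. by rewrite -addrA ltr_wpDr ?subr_ge0 ?eta1i_le_eta1. Qed.

Lemma sum_mix_weights :
  \sum_t alpha t * (1 - theta * (1 - gam alpha beta t)) ^+ 2
  = 1 + theta ^+ 2 * (\sum_t beta t ^+ 2 / alpha t - 1).
Proof.
transitivity (\sum_t ((1 - theta) ^+ 2 * alpha t + (2 * theta * (1 - theta)) * beta t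
                      + theta ^+ 2 * (beta t ^+ 2 / alpha t))).
  by apply: eq_bigr => t _; rewrite /gam; field; rewrite gt_eqF.
by rewrite !big_split /= -!mulr_sumr alpha_sum1 beta_sum1; ring.
Qed.

Lemma Upsilon_ebasis i :
  Upsilon psi psif w theta alpha beta (ebasis R i)
  = 1 + theta ^+ 2 * (\sum_t beta t ^+ 2 / alpha t - 1)
    + eta_ i / (1 + eta - eta_ i) * Delta psi psif w theta alpha beta.
Proof.
have ab_eta_neq0 a b : 0 < a -> 0 < b -> a + b * eta != 0.
  by move=> a_gt0 b_gt0; rewrite gt_eqF // add_mul_eta1_gt0 // ltW.
rewrite /Upsilon quad_ebasis Gmat_diag ?ab_eta_neq0 ?oner_neq0 //.
under eq_bigr => t _ do rewrite quad_ebasis Gmat_diag ?ab_eta_neq0 ?gt_eqF //.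
rewrite -sum_mix_weights /Delta mulr_suml mulr_sumr -big_split /=.
(* Termwise: (1 + g eta - g eta_i) (1 + eta)
   = (1 + g eta) (1 + eta - eta_i) + eta_i (1 - g), with g = gamma_t. *)
apply: eq_bigr => t _; rewrite /gam; field.
have := ab_eta_neq0 1 1 ltr01 ltr01; rewrite mul1r => ->.
by rewrite [eta * _]mulrC ab_eta_neq0 // !gt_eqF ?eta1_sub_eta1i_gt0.
Qed.

Lemma eta1i_odds_le i j : w i 0 ^+ 2 / psi i <= w j 0 ^+ 2 / psi j ->
  eta_ i / (1 + eta - eta_ i) <= eta_ j / (1 + eta - eta_ j).
Proof.
move=> le_ij.
by rewrite ler_div_sub ?eta1i_ge0 ?eta1i_le ?eta1_sub_eta1i_gt0.
Qed.

End CostRatio.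

Theorem mainTheorem10 (R : realFieldType) (N T : nat)
  (psi : 'I_N -> R) (psif : R) (w : 'cV[R]_N) (theta : R)
  (alpha beta : 'I_T -> R)
  (hpsi : forall i, 0 < psi i) (hpsif : 0 < psif) (hw : w != 0)
  (htheta0 : 0 <= theta) (htheta1 : theta <= 1)
  (halpha : forall t, 0 < alpha t) (hbeta : forall t, 0 < beta t)
  (hsa : \sum_(t < T) alpha t = 1) (hsb : \sum_(t < T) beta t = 1) :
  (forall i : 'I_N,
     Upsilon psi psif w theta alpha beta (@ebasis R N i)
     = 1 + theta ^+ 2 * (\sum_(t < T) beta t ^+ 2 / alpha t - 1)
       + eta1i psi psif w i / (1 + eta1 psi psif w - eta1i psi psif w i)
         * Delta psi psif w theta alpha beta)
  /\ (0 <= Delta psi psif w theta alpha beta ->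
      forall i : 'I_N, (forall j, w j 0 ^+ 2 / psi j <= w i 0 ^+ 2 / psi i) ->
      forall j, Upsilon psi psif w theta alpha beta (@ebasis R N j)
                <= Upsilon psi psif w theta alpha beta (@ebasis R N i))
  /\ (Delta psi psif w theta alpha beta <= 0 ->
      forall i : 'I_N, (forall j, w i 0 ^+ 2 / psi i <= w j 0 ^+ 2 / psi j) ->
      forall j, Upsilon psi psif w theta alpha beta (@ebasis R N j)
                <= Upsilon psi psif w theta alpha beta (@ebasis R N i)).
Proof.
have Ue := Upsilon_ebasis w theta hpsi hpsif halpha hbeta hsa hsb.
have odds_le := eta1i_odds_le (w := w) hpsi hpsif.
split; first exact: Ue.
split=> Delta_sign i i_opt j; rewrite !Ue lerD2l.
- by rewrite ler_wpM2r // odds_le.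
- by rewrite ler_wnM2r // odds_le.
Qed.
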